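(* Let $(f,p)$ be a DSIC one-player mechanism with quasi-linear additive utilities on $m$ items, and let $G_f$ be its allocation network. Let $C=(a^{(1)},\dots,a^{(k)}=a^{(1)})$ be a cycle in $G_f$ such that $Q_{a^{(j)}}\cap Q_{a^{(j+1)}}\neq\emptyset$ for every $j\in[k-1]$. Then the length $\sum_{j=1}^{k-1}\ell(a^{(j)},a^{(j+1)})$ of $C$ equals $0$.
   Context: Types $\theta\in\Theta\subseteq\mathbb R^m$, allocations $a\in\{0,1\}^m$, allocation function $f:\Theta\to\{0,1\}^m$, payment $p:\Theta\to\mathbb R$; DSIC means $\theta\cdot f(\theta)-p(\theta)\ge\theta\cdot f(\theta')-p(\theta')$ for all $\theta,\theta'\in\Theta$. $R_a=\{\theta\in\Theta:f(\theta)=a\}$ and $Q_a=\mathrm{cl}(R_a)$. The allocation network $G_f$ is the complete directed graph on node set $\{0,1\}^m$ with arc lengths $\ell(a,a')=\inf_{\theta\in R_{a'}}\{\theta\cdot a'-\theta\cdot a\}$. *)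

From HB Require Import structures.
From mathcomp Require Import all_boot all_order all_algebra.
From mathcomp Require Import all_classical all_reals all_analysis.
Set Implicit Arguments. Unset Strict Implicit. Unset Printing Implicit Defensive.
Import Order.TTheory GRing.Theory Num.Theory.
Import numFieldNormedType.Exports.
Local Open Scope classical_set_scope.
Local Open Scope ring_scope.

Definition alloc (m : nat) := {ffun 'I_m -> bool}.

Definition dotA (R : realType) (m : nat) (th : 'rV[R]_m) (a : alloc m) : R :=
  \sum_(i < m) th 0 i * (a i)%:R.

Definition DSIC (R : realType) (m : nat) (Theta : set 'rV[R]_m)
    (f : 'rV[R]_m -> alloc m) (p : 'rV[R]_m -> R) : Prop :=
  forall th th', Theta th -> Theta th' ->
    dotA th (f th') - p th' <= dotA th (f th) - p th.

Definition region (R : realType) (m : nat) (Theta : set 'rV[R]_m)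
    (f : 'rV[R]_m -> alloc m) (a : alloc m) : set 'rV[R]_m :=
  [set th | Theta th /\ f th = a].

Definition cregion (R : realType) (m : nat) (Theta : set 'rV[R]_m)
    (f : 'rV[R]_m -> alloc m) (a : alloc m) : set 'rV[R]_m :=
  closure (region Theta f a).

Definition arc_len (R : realType) (m : nat) (Theta : set 'rV[R]_m)
    (f : 'rV[R]_m -> alloc m) (a a' : alloc m) : \bar R :=
  ereal_inf [set (dotA th a' - dotA th a)%:E | th in region Theta f a'].

(* DSIC forces the payment to depend only on the allocation, so p = price (f theta) for a menu
   price of each allocation, and every theta in R_a prefers a to b:
   theta.b - theta.a <= price b - price a on R_a, with the reverse inequality on R_b.  These
   bounds pass to the closures Q_a and Q_b by continuity of theta.b - theta.a, so at a common
   point of Q_a and Q_b they are attained, and the infimum defining l(a, b) equals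
   price b - price a.  The length of a cycle is therefore a telescoping sum, equal to 0. *)
From HB Require Import structures.
From mathcomp Require Import all_boot all_order all_algebra.
From mathcomp Require Import all_classical all_reals all_analysis.
From mathcomp Require Import lra.
Set Implicit Arguments.
Unset Strict Implicit.
Unset Printing Implicit Defensive.
Import Order.TTheory GRing.Theory Num.Theory.
Import numFieldNormedType.Exports.
Local Open Scope classical_set_scope.
Local Open Scope ring_scope.

Lemma closure_sub_preimage_closed (T U : topologicalType) (g : T -> U)
    (A : set T) (D : set U) :
  continuous g -> closed D -> A `<=` g @^-1` D -> closure A `<=` g @^-1` D.
Proof.
move=> g_cont D_closed AD.
have closed_gD : closed (g @^-1` D) by apply: preimage_closed => // x _; exact: g_cont.
by rewrite [X in _ `<=` X](closure_id _).1 //; exact: closureS.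
Qed.

Lemma ereal_inf_image_closure (T : topologicalType) (R : realType) (g : T -> R)
    (A : set T) (x : T) :
  {for x, continuous g} -> closure A x -> (forall y, A y -> g x <= g y) ->
  ereal_inf [set (g y)%:E | y in A] = (g x)%:E.
Proof.
move=> g_cont Ax gx_min; apply/le_anti/andP; split; last first.
  by apply: le_ereal_inf_tmp => _ [y Ay <-]; rewrite lee_fin; exact: gx_min.
apply/lee_addgt0Pr => e e_gt0.
have near_x : nbhs x (g @^-1` [set z | z < g x + e]).
  by apply: g_cont; apply: open_nbhs_nbhs; split; [exact: open_lt | rewrite /= ltrDl].
have [y [Ay gy_lt]] := Ax _ near_x.
apply: le_trans (ereal_inf_lbound _) _; first by exists y.
by rewrite -EFinD lee_fin ltW.
Qed.

Lemma continuous_dotA (R : realType) (m : nat) (a : alloc m) :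
  continuous (fun th : 'rV[R]_m => dotA th a).
Proof.
apply: continuous_big => [|i _]; first exact: add_continuous.
move=> th; have := @continuousM _ _ (fun th : 'rV[R]_m => th 0 i) (fun=> (a i)%:R) th.
by apply; [exact: coord_continuous | exact: cst_continuous].
Qed.

Section DSICMechanism.
Variables (R : realType) (m : nat) (Theta : set 'rV[R]_m).
Variables (f : 'rV[R]_m -> alloc m) (p : 'rV[R]_m -> R).
Hypothesis dsic : DSIC Theta f p.

Lemma DSIC_payment_diff_le a b t t' :
  region Theta f a t -> region Theta f b t' ->
  p t' - p t <= dotA t' b - dotA t' a.
Proof.
by move=> [Tt <-] [Tt' <-]; have := @dsic t' t Tt' Tt; lra.
Qed.

Lemma DSIC_payment_region a t t' :
  region Theta f a t -> region Theta f a t' -> p t = p t'.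
Proof.
move=> Rt Rt'.
have := DSIC_payment_diff_le Rt Rt'; have := DSIC_payment_diff_le Rt' Rt.
by rewrite !subrr; lra.
Qed.

Lemma arc_len_DSIC a b t t' :
  cregion Theta f a `&` cregion Theta f b !=set0 ->
  region Theta f a t -> region Theta f b t' ->
  arc_len Theta f a b = (p t' - p t)%:E.
Proof.
move=> [x [Qa_x Qb_x]] Rt Rt'.
set g := fun th : 'rV[R]_m => dotA th b - dotA th a.
have g_cont : continuous g.
  by move=> th; apply: continuousB; exact: continuous_dotA.
have ge_on_b : region Theta f b `<=` g @^-1` [set z | p t' - p t <= z].
  move=> th Rth; rewrite /= (DSIC_payment_region Rt' Rth).
  exact: DSIC_payment_diff_le Rt Rth.
have le_on_a : region Theta f a `<=` g @^-1` [set z | z <= p t' - p t].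
  move=> th Rth; rewrite /= (DSIC_payment_region Rt Rth).
  by have := DSIC_payment_diff_le Rt' Rth; rewrite /g; lra.
have gx : g x = p t' - p t.
  apply/le_anti/andP; split.
    exact: (closure_sub_preimage_closed g_cont (@closed_le _ _) le_on_a Qa_x).
  exact: (closure_sub_preimage_closed g_cont (@closed_ge _ _) ge_on_b Qb_x).
have -> : (p t' - p t)%:E = (g x)%:E by rewrite gx.
apply: (ereal_inf_image_closure (g_cont x) Qb_x) => th Rth.
by apply: le_trans (ge_on_b th Rth); rewrite gx.
Qed.

Definition menu_price (a : alloc m) : R := p (xget 0 (region Theta f a)).

Lemma arc_len_menu_price a b :
  cregion Theta f a `&` cregion Theta f b !=set0 ->
  arc_len Theta f a b = (menu_price b - menu_price a)%:E.
Proof.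
move=> Qab; have [x [Qa_x Qb_x]] := Qab.
have region_xget c : cregion Theta f c x -> region Theta f c (xget 0 (region Theta f c)).
  by move=> Qc_x; apply: xgetPex; have [y [Rc_y _]] := Qc_x setT filterT; exists y.
exact: arc_len_DSIC Qab (region_xget _ Qa_x) (region_xget _ Qb_x).
Qed.

End DSICMechanism.

Theorem proposition3p4 (R : realType) (m : nat) (Theta : set 'rV[R]_m)
    (f : 'rV[R]_m -> alloc m) (p : 'rV[R]_m -> R)
    (k : nat) (a : nat -> alloc m) :
  DSIC Theta f p ->
  a k.-1 = a 0%N ->
  (forall j, (j < k.-1)%N ->
     cregion Theta f (a j) `&` cregion Theta f (a j.+1) !=set0) ->
  (\sum_(j < k.-1) arc_len Theta f (a j) (a j.+1))%E = 0%E.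
Proof.
move=> dsic cycle_a adjacent.
set price := fun j => menu_price Theta f p (a j).
under eq_bigr => j _ do rewrite (arc_len_menu_price dsic (adjacent j (ltn_ord j))).
rewrite sumEFin -(big_mkord xpredT (fun j => price j.+1 - price j)).
by rewrite telescope_sumr // /price cycle_a subrr.
Qed.
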